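(* For every smooth projective fan $\mathcal F$ in $V$, the cohomology of the differential graded algebra $(D_{\mathcal F},d)$ is $H^0(D_{\mathcal F},d)=\mathbb Q$ and $H^i(D_{\mathcal F},d)=0$ for all $i>0$.
   Context: $T$ is a complex algebraic torus of dimension $n$, $X_*(T)$ its cocharacter lattice, $V=X_*(T)\otimes\mathbb R$. $\mathcal F$ is a smooth projective rational fan in $V$ with set of vertices (primitive ray generators) $\Gamma_{\mathcal F}$. $D_{\mathcal F}$ is the quotient of the graded-commutative algebra $\mathbb Q[x_c]_{c\in\Gamma_{\mathcal F}}\otimes\bigwedge(\tau_c)_{c\in\Gamma_{\mathcal F}}$ (with $\deg x_c=2$, $\deg\tau_c=1$) by the ideal $\mathcal J_{\mathcal F}$ generated by all monomials $x_{c_{i_1}}\cdots x_{c_{i_h}}\tau_{c_{j_1}}\cdots\tau_{c_{j_k}}$ such that the vertices $c_{i_1},\dots,c_{i_h},c_{j_1},\dots,c_{j_k}$ do not span a cone of $\mathcal F$. The differential $d$ is the unique (graded) derivation of degree $1$ with $d(x_c)=0$, $d(\tau_c)=x_c$; it preserves $\mathcal J_{\mathcal F}$. *)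

From HB Require Import structures.
From mathcomp Require Import all_boot all_order all_algebra.
From mathcomp Require Import freeg.
Set Implicit Arguments. Unset Strict Implicit. Unset Printing Implicit Defensive.
Import Order.TTheory GRing.Theory Num.Theory.
Local Open Scope ring_scope.

(* Fans.  X_*(T) is identified with Z^n (column vectors), V = R^n.     *)
(* A simplicial fan is given by a finite index type Γ of vertices,     *)
(* the ray generator  ray c : Z^n  of each vertex, and the set         *)
(* [cones] of those vertex subsets which span a cone of the fan.       *)
(* Cones are tested on rational points (all data are rational).        *)
Section Fans.
Variables (n : nat) (Γ : finType) (ray : Γ -> 'cV[int]_n).

Definition rayQ (c : Γ) : 'cV[rat]_n := map_mx (fun z : int => z%:~R) (ray c).

Definition in_cone (σ : {set Γ}) (v : 'cV[rat]_n) : Prop :=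
  exists lam : Γ -> rat,
    [/\ forall c, 0 <= lam c, forall c, c \notin σ -> lam c = 0
      & v = \sum_(c : Γ) lam c *: rayQ c].

(* smooth rational fan whose set of vertices is exactly Γ *)
Definition is_smooth_fan (cones : {set {set Γ}}) : Prop :=
  [/\ injective ray,
      set0 \in cones /\ (forall c : Γ, [set c] \in cones),
      (forall σ τ : {set Γ}, σ \in cones -> τ \subset σ -> τ \in cones),
      (* two cones meet in a common face *)
      (forall σ τ : {set Γ}, σ \in cones -> τ \in cones ->
         forall v, (in_cone σ v /\ in_cone τ v) <-> in_cone (σ :&: τ) v) &
      (* smoothness: the rays of every cone are part of a Z-basis of Z^n *)
      (forall σ : {set Γ}, σ \in cones ->
         exists (B : 'M[int]_n) (f : Γ -> 'I_n),
           [/\ B \in unitmx, {in σ &, injective f}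
             & forall c, c \in σ -> col (f c) B = ray c])].

Definition is_complete_fan (cones : {set {set Γ}}) : Prop :=
  forall v : 'cV[rat]_n, exists2 σ, σ \in cones & in_cone σ v.

(* projective: complete and admitting a strictly convex support function,
   given by linear forms m σ on the maximal (n-dimensional) cones:
   ψ = m τ on cone τ, and m σ <= ψ everywhere with equality exactly on cone σ *)
Definition is_projective_fan (cones : {set {set Γ}}) : Prop :=
  is_complete_fan cones /\
  exists m : {set Γ} -> 'rV[rat]_n,
    forall σ τ : {set Γ}, σ \in cones -> τ \in cones ->
      #|σ| = n -> #|τ| = n ->
      forall v : 'cV[rat]_n, in_cone τ v ->
        (m σ *m v) 0 0 <= (m τ *m v) 0 0 /\
        ((m σ *m v) 0 0 = (m τ *m v) 0 0 <-> in_cone σ v).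

End Fans.

(* The free graded-commutative algebra Q[x_c] ⊗ Λ(τ_c), c ∈ Γ.          *)
(* Basis: monomials x^a τ^S  (a : Γ -> nat, S ⊆ Γ), where τ^S is the    *)
(* product of the τ_c, c ∈ S, in increasing order of enum_rank.         *)
Section Algebra.
Variable Γ : finType.

Definition mon : Type := ({ffun Γ -> nat} * {set Γ})%type.
Definition alg : Type := {freeg mon / rat}.

Definition rk (c : Γ) : nat := enum_rank c.

Definition mdeg (m : mon) : nat := (\sum_(c : Γ) m.1 c).*2 + #|m.2|.

Definition homog (i : nat) (v : alg) : Prop :=
  forall m : mon, coeff m v != 0 -> mdeg m = i.

Definition one_alg : alg := << ([ffun=> 0%N], set0) >>.

(* product of basis monomials (x's are even, hence central) *)
Definition mulm (m1 m2 : mon) : alg :=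
  if [disjoint m1.2 & m2.2] then
    ((-1) ^+ (\sum_(s in m1.2) #|[set t in m2.2 | (rk t < rk s)%N]|) : rat)
      *: << ([ffun c => m1.1 c + m2.1 c], m1.2 :|: m2.2) >>
  else 0.

Definition mul_alg (u v : alg) : alg :=
  fglift (fun m1 => fglift (fun m2 => mulm m1 m2) v) u.

(* the differential: the derivation with d x_c = 0, d τ_c = x_c, i.e.
   d(x^a τ_{s1}...τ_{sk}) = Σ_j (-1)^(j-1) x^(a + e_{sj}) τ_{s1}..^..τ_{sk} *)
Definition dm (m : mon) : alg :=
  \sum_(s in m.2)
    ((-1) ^+ #|[set t in m.2 | (rk t < rk s)%N]| : rat)
      *: << ([ffun c => m.1 c + (c == s)%N], m.2 :\ s) >>.

Definition d_alg (v : alg) : alg := fglift dm v.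

Definition gen_mon (cones : {set {set Γ}}) (m : mon) : bool :=
  ([set c | (0 < m.1 c)%N] :|: m.2) \notin cones.

(* J = the (two-sided) ideal generated by these monomials *)
Definition in_J (cones : {set {set Γ}}) (v : alg) : Prop :=
  exists s : seq (alg * mon * alg),
    all (fun t => gen_mon cones t.1.2) s /\
    v = \sum_(t <- s) mul_alg (mul_alg t.1.1 << t.1.2 >>) t.2.

End Algebra.

From HB Require Import structures.
From mathcomp Require Import all_boot all_order all_algebra.
From mathcomp Require Import freeg.
From mathcomp Require Import zify.
Set Implicit Arguments. Unset Strict Implicit. Unset Printing Implicit Defensive.
Import Order.TTheory GRing.Theory Num.Theory.
Local Open Scope ring_scope.

(* The support of a monomial x^a τ^S is the vertex set {c | a_c > 0} ∪ S,
   and multiplying monomials only enlarges supports.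
   Since the cones of F are closed under taking faces, J is exactly the
   span of the monomials whose support is not a cone; so a vector lies in
   J iff it is supported on such monomials.

   On a monomial m with nonempty support let c be its least vertex and put
   h(m) = 0 if τ_c divides m, and h(m) = τ_c · m / x_c otherwise.  Then
   dh + hd = id on such monomials, h lowers the degree by one and keeps
   the support.  Hence for a cocycle v of positive degree modulo J,
   v - d(h v) = h(d v) lies in J; in degree 0 every element is a multiple
   of 1, and 1 is not in J because the empty set is a cone. *)

Section FreeVectorSpace.
Variable K : choiceType.
Implicit Types (u v : {freeg K / rat}) (k : rat) (x : K).

HB.instance Definition _ (M : lmodType rat) (f : K -> M) :=
  GRing.isZmodMorphism.Build {freeg K / rat} M (fglift f) (lift_is_additive f).

Lemma freegZU k k' x : k *: << k' *g x >> = << (k * k') *g x >> :> {freeg K / rat}.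
Proof. by apply/eqP/freeg_eqP => y; rewrite coeffZ !coeffU mulrA. Qed.

Lemma fgliftZ (M : lmodType rat) (f : K -> M) k v : fglift f (k *: v) = k *: fglift f v.
Proof.
elim/freeg_ind_dom0: v => [|k' x v _ _ IH]; first by rewrite scaler0 raddf0 scaler0.
by rewrite scalerDr !raddfD /= IH freegZU !liftU scalerA.
Qed.

Definition supported_by (Q : pred K) v := forall x, coeff x v != 0 -> Q x.

Lemma supported0 (Q : pred K) : supported_by Q 0.
Proof. by move=> x; rewrite coeff0 eqxx. Qed.

Lemma supported_sum (Q : pred K) (I : Type) (s : seq I) (P : pred I) F :
  (forall i, P i -> supported_by Q (F i)) ->
  supported_by Q (\sum_(i <- s | P i) F i).
Proof.
move=> HF; apply: (big_ind (supported_by Q)) => //; first exact: supported0.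
move=> u w Hu Hw x; rewrite coeffD.
have [/Hu //|/negbNE/eqP ->] := boolP (coeff x u != 0).
by rewrite add0r => /Hw.
Qed.

Lemma supportedZ (Q : pred K) k v : supported_by Q v -> supported_by Q (k *: v).
Proof. by move=> Hv x; rewrite coeffZ mulf_eq0 negb_or => /andP[_ /Hv]. Qed.

Lemma supportedU (Q : pred K) k x : Q x -> supported_by Q << k *g x >>.
Proof.
by move=> Qx y; rewrite coeffU; case: (x =P y) => [<- //|_]; rewrite mulr0 eqxx.
Qed.

Lemma supported_lift (Q : pred K) (f : K -> {freeg K / rat}) v :
  (forall x, coeff x v != 0 -> supported_by Q (f x)) -> supported_by Q (fglift f v).
Proof.
move=> Hf; rewrite -(freeg_sumE v) raddf_sum /= big_seq; apply: supported_sum => x.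
by rewrite mem_dom => /Hf Hx; rewrite liftU; apply: supportedZ.
Qed.

End FreeVectorSpace.

Section Homotopy.
Variable Γ : finType.
Implicit Types (m : mon Γ) (v : alg Γ) (A S : {set Γ}).

Definition sup m : {set Γ} := [set c | (0 < m.1 c)%N] :|: m.2.

Definition one_mon : mon Γ := ([ffun=> 0%N], set0).

Lemma sub_sup m : m.2 \subset sup m.
Proof. by apply/subsetP => x xS; rewrite /sup inE xS orbT. Qed.

Definition least A : option Γ := [pick c in A | [forall t in A, (rk c <= rk t)%N]].

Lemma leastS A c :
  least A = Some c -> c \in A /\ forall t, t \in A -> (rk c <= rk t)%N.
Proof.
rewrite /least; case: pickP => [c' /andP[cA /forallP H] [<-]|//]; split=> // t tA.
by have /implyP := H t; apply.
Qed.

Lemma least_exists A : A != set0 -> exists c, least A = Some c.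
Proof.
case/set0Pn => c0 c0A; rewrite /least; case: pickP => [c _|]; first by exists c.
case: (arg_minnP (fun c => rk c) c0A) => c cA Hc /(_ c) /negbT /negP[].
by apply/andP; split; [exact: cA | apply/forallP => t; apply/implyP; apply: Hc].
Qed.

(* rk is injective, so every other vertex of A has a strictly larger rank. *)
Lemma least_lt A c s : least A = Some c -> s \in A -> s != c -> (rk c < rk s)%N.
Proof.
move=> /leastS[_ Hc] sA; apply: contraNT; rewrite -leqNgt => le_sc.
have /eqP E : rk s == rk c by rewrite eqn_leq le_sc Hc.
by apply/eqP/enum_rank_inj/val_inj.
Qed.

(* No element of a subset of A precedes the least vertex of A: so the sign
   attached to τ_c in d is +1. *)
Lemma least_no_predecessor A S c : least A = Some c -> S \subset A ->
  #|[set t in S | (rk t < rk c)%N]| = 0%N.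
Proof.
move=> /leastS[_ Hc] SA; apply/eqP; rewrite cards_eq0; apply/eqP/setP => t.
by rewrite !inE; apply/negP => /andP[tS]; rewrite ltnNge Hc // (subsetP SA).
Qed.

Lemma sup_dterm (a : {ffun Γ -> nat}) S s : s \in S ->
  sup ([ffun x => (a x + (x == s))%N], S :\ s) = sup (a, S).
Proof.
move=> sS; apply/setP => x; rewrite /sup !inE ffunE /=.
by case: (eqVneq x s) => [->|_]; rewrite ?addn1 ?sS ?orbT ?addn0.
Qed.

Definition hm m : alg Γ :=
  if least (sup m) is Some c then
    if c \in m.2 then 0 else << ([ffun x => (m.1 x - (x == c))%N], c |: m.2) >>
  else 0.

Definition h_alg v : alg Γ := fglift hm v.

Lemma h_dm m : h_alg (dm m) = \sum_(s in m.2)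
  ((-1) ^+ #|[set t in m.2 | (rk t < rk s)%N]| : rat)
    *: hm ([ffun x => (m.1 x + (x == s))%N], m.2 :\ s).
Proof.
rewrite /h_alg /dm raddf_sum /=; apply: eq_bigr => s _.
by rewrite fgliftZ liftU scale1r.
Qed.

Section LeastVertex.
Variables (a : {ffun Γ -> nat}) (S : {set Γ}) (c : Γ).
Hypothesis least_c : least (sup (a, S)) = Some c.

(* The terms of d m all have c as least vertex of their support. *)
Lemma hm_dterm s : s \in S -> hm ([ffun x => (a x + (x == s))%N], S :\ s) =
  if c \in S :\ s then 0
  else << ([ffun x => (a x + (x == s) - (x == c))%N], c |: (S :\ s)) >>.
Proof.
move=> sS; rewrite /hm sup_dterm // least_c; case: ifP => // _.
by congr << (_, _) >>; apply/ffunP => x; rewrite !ffunE.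
Qed.

(* Case τ_c | m: h m = 0, and only the term of d m removing τ_c survives h. *)
Lemma homotopy_tau (cS : c \in S) : h_alg (dm (a, S)) = << (a, S) >>.
Proof.
rewrite h_dm /= (bigD1 c) //= big1 ?addr0; last first.
  by move=> s /andP[sS nsc]; rewrite hm_dterm // in_setD1 eq_sym nsc cS scaler0.
rewrite hm_dterm // setD11 (least_no_predecessor least_c (sub_sup _)) scale1r.
congr << (_, _) >>; last exact: setD1K.
by apply/ffunP => x; rewrite !ffunE addnK.
Qed.

(* Case τ_c ∤ m: the τ_c-term of d(h m) is m, and the other terms of d(h m)
   cancel those of h(d m). *)
Lemma homotopy_x (cS : c \notin S) :
  d_alg (hm (a, S)) + h_alg (dm (a, S)) = << (a, S) >>.
Proof.
have [cA _] := leastS least_c.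
have ac : (0 < a c)%N by move: cA; rewrite /sup !inE (negbTE cS) orbF.
have cSA : c |: S \subset sup (a, S).
  by rewrite subUset sub1set cA (sub_sup (a, S)).
rewrite h_dm {1}/hm least_c (negbTE cS) /d_alg liftU scale1r /dm /= (bigD1 c) ?setU11 //=.
rewrite setU1K // (least_no_predecessor least_c cSA) scale1r.
have -> : [ffun x => ([ffun y => (a y - (y == c))%N] x + (x == c))%N] = a.
  apply/ffunP => x; rewrite !ffunE.
  by case: (eqVneq x c) => [->|]; rewrite ?subnK ?subn0 ?addn0.
rewrite -addrA -[RHS]addr0; congr (_ + _).
rewrite [X in X + _](eq_bigl (mem S)); last first.
  by move=> s; rewrite in_setU1; case: (eqVneq s c) => [->|] /=; rewrite ?(negbTE cS) ?andbT.
rewrite -big_split /=; apply: big1 => s sS.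
have nsc : s != c by apply: contraNneq cS => <-.
rewrite hm_dterm // in_setD1 eq_sym nsc (negbTE cS) /=.
have -> : [set t in c |: S | (rk t < rk s)%N] = c |: [set t in S | (rk t < rk s)%N].
  apply/setP => t; rewrite !inE; case: (eqVneq t c) => [->|] //=.
  by rewrite (least_lt least_c) // (subsetP (sub_sup (a, S))).
rewrite cardsU1 inE (negbTE cS) /= exprS mulN1r scaleNr.
have -> : (c |: S) :\ s = c |: (S :\ s).
  by apply/setP => t; rewrite !inE; case: (eqVneq t c) => [->|] //=; rewrite eq_sym nsc.
have -> : [ffun x => ([ffun y => (a y - (y == c))%N] x + (x == s))%N] =
          [ffun x => (a x + (x == s) - (x == c))%N].
  apply/ffunP => x; rewrite !ffunE.
  have ncs : c != s by rewrite eq_sym.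
  by case: (eqVneq x c) => [->|]; rewrite ?(negbTE ncs) ?addn0 ?subn0.
exact: addNr.
Qed.

End LeastVertex.

Lemma homotopy_mon m : sup m != set0 -> d_alg (hm m) + h_alg (dm m) = << m >>.
Proof.
case: m => a S /least_exists [c least_c].
have [cS|cS] := boolP (c \in S); last exact: (homotopy_x least_c cS).
by rewrite (homotopy_tau least_c cS) /hm least_c cS /d_alg raddf0 add0r.
Qed.

Lemma homotopy v : supported_by (fun m => sup m != set0) v ->
  d_alg (h_alg v) + h_alg (d_alg v) = v.
Proof.
move=> Hv; rewrite -(freeg_sumE v) /h_alg /d_alg !raddf_sum /= -big_split /=.
rewrite !big_seq; apply: eq_bigr => m; rewrite mem_dom => /Hv Hm.
rewrite !liftU !fgliftZ -scalerDr.
by rewrite homotopy_mon // freegZU mulr1.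
Qed.

Lemma hm_sup m : supported_by (fun m' => sup m' == sup m) (hm m).
Proof.
case: m => a S; rewrite /hm; case E: (least _) => [c|]; last exact: supported0.
have [cA _] := leastS E; case: ifP => cS; first exact: supported0.
apply: supportedU; apply/eqP/setP => x; rewrite /sup !inE ffunE /=.
case: (eqVneq x c) => [->|_]; last by rewrite subn0.
by rewrite orbT; move: cA; rewrite /sup !inE.
Qed.

Lemma hm_deg m : supported_by (fun m' => mdeg m' == (mdeg m).-1) (hm m).
Proof.
case: m => a S; rewrite /hm; case E: (least _) => [c|]; last exact: supported0.
have [cA _] := leastS E; case: ifP => cS; first exact: supported0.
have ac : (0 < a c)%N by move: cA; rewrite /sup !inE cS orbF.
apply: supportedU; apply/eqP; rewrite /mdeg /= cardsU1 cS /=.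
have -> : (\sum_x a x = \sum_x (a x - (x == c)) + 1)%N.
  have -> : 1%N = (\sum_x ((x == c) : nat))%N.
    by rewrite (bigD1 c) //= eqxx big1 // => x /negbTE ->.
  rewrite -big_split /=; apply: eq_bigr => x _.
  by case: (eqVneq x c) => [->|_]; rewrite ?subnK ?subn0 ?addn0.
under eq_bigr do rewrite ffunE.
by set k := (\sum_x _)%N; rewrite -!muln2; lia.
Qed.

Lemma mdeg_eq0 m : (mdeg m == 0%N) = (sup m == set0).
Proof.
case: m => a S; rewrite /mdeg /= addn_eq0 double_eq0 sum_nat_eq0 cards_eq0.
rewrite /sup setU_eq0 /=; congr (_ && _); apply/forallP/eqP => [H|E x].
- by apply/setP => x; rewrite !inE lt0n; move/implyP: (H x) => /(_ isT) ->.
- by move/setP: E => /(_ x); rewrite !inE lt0n => /negbFE.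
Qed.

Lemma sup_eq0 m : sup m = set0 -> m = one_mon.
Proof.
case: m => a S /setP E; rewrite /one_mon; congr pair.
- by apply/ffunP => x; move: (E x); rewrite !inE ffunE lt0n => /norP[/negbNE/eqP].
- by apply/setP => x; move: (E x); rewrite !inE => /norP[_ /negbTE].
Qed.

End Homotopy.

Section Ideal.
Variables (Γ : finType) (cones : {set {set Γ}}).
Hypothesis cones_faces : forall σ τ : {set Γ}, σ \in cones -> τ \subset σ -> τ \in cones.
Implicit Types (m : mon Γ) (u v w : alg Γ).

Definition nonface m := sup m \notin cones.

(* Since cones are closed under faces, enlarging a non-face support gives
   a non-face. *)
Lemma nonface_sub m m' : sup m \subset sup m' -> nonface m -> nonface m'.
Proof. by move=> sub; apply: contra => H; apply: cones_faces H sub. Qed.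

Lemma mulm_nonface m1 m2 : nonface m1 || nonface m2 -> supported_by nonface (mulm m1 m2).
Proof.
move=> Hb; rewrite /mulm; case: ifP => _; last exact: supported0.
apply: supportedZ; apply: supportedU; case/orP: Hb; apply: nonface_sub;
  apply/subsetP => x; rewrite /sup !inE ffunE /=.
- by case/orP => [/leq_trans->|->]; rewrite ?leq_addr ?orbT.
- by case/orP => [/leq_trans->|->]; rewrite ?leq_addl ?orbT.
Qed.

Lemma mulm1 m : mulm m (one_mon Γ) = << m >>.
Proof.
case: m => a S; rewrite /mulm /= disjoint_sym disjoints_subset sub0set.
rewrite big1 => [|s _]; last first.
  by apply/eqP; rewrite cards_eq0; apply/eqP/setP => t; rewrite !inE.
rewrite expr0 scale1r setU0; congr << (_, _) >>.
by apply/ffunP => x; rewrite !ffunE addr0.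
Qed.

Lemma mul1m m : mulm (one_mon Γ) m = << m >>.
Proof.
case: m => a S; rewrite /mulm /= disjoints_subset sub0set big_set0 expr0 scale1r.
by rewrite set0U; congr << (_, _) >>; apply/ffunP => x; rewrite !ffunE.
Qed.

Lemma mul_nonface_l u w : supported_by nonface u -> supported_by nonface (mul_alg u w).
Proof.
move=> Hu; apply: supported_lift => z /Hu nf_z; apply: supported_lift => z' _.
by apply: mulm_nonface; rewrite nf_z.
Qed.

Lemma mul_nonface_r u m : nonface m -> supported_by nonface (mul_alg u << m >>).
Proof.
move=> nf_m; apply: supported_lift => z _; apply: supported_lift => z'.
rewrite coeffU; case: (m =P z') => [<- _|_]; last by rewrite mulr0 eqxx.
by apply: mulm_nonface; rewrite nf_m orbT.
Qed.

Lemma in_J_supported v : in_J cones v <-> supported_by nonface v.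
Proof.
split.
- case=> s [/allP Hs ->]; rewrite big_seq; apply: supported_sum => t /Hs nf_t.
  exact/mul_nonface_l/mul_nonface_r.
- move=> Hv; exists [seq ((one_alg Γ, z), << coeff z v *g one_mon Γ >>) | z <- dom v].
  split; first by apply/allP => t /mapP [z zd ->]; apply: Hv; rewrite -mem_dom.
  rewrite big_map -{1}(freeg_sumE v); apply: eq_bigr => z _ /=.
  rewrite /mul_alg /one_alg !liftU !scale1r mul1m liftU scale1r liftU mulm1.
  by rewrite freegZU mulr1.
Qed.

End Ideal.

Theorem proposition3p1 (n : nat) (Γ : finType) (ray : Γ -> 'cV[int]_n)
    (cones : {set {set Γ}}) :
  is_smooth_fan ray cones -> is_projective_fan ray cones ->
  [/\ ~ in_J cones (one_alg Γ),
      (forall v : alg Γ, homog 0 v -> in_J cones (d_alg v) ->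
         exists c : rat, in_J cones (v - c *: one_alg Γ)) &
      (forall (i : nat) (v : alg Γ), (0 < i)%N -> homog i v ->
         in_J cones (d_alg v) ->
         exists w : alg Γ, homog i.-1 w /\ in_J cones (v - d_alg w))].
Proof.
move=> [_ [empty_cone _] faces _ _] _; have J_span := in_J_supported faces.
have sup_one : sup (one_mon Γ) = set0 by apply/setP => x; rewrite !inE ffunE.
split.
- move/J_span => /(_ (one_mon Γ)); rewrite coeffU eqxx mulr1 oner_eq0.
  by rewrite /nonface sup_one empty_cone => /(_ isT).
- move=> v v_deg0 _; exists (coeff (one_mon Γ) v); apply/J_span => m.
  rewrite coeffB coeffZ coeffU mul1r.
  have [<-|ne] := eqVneq (one_mon Γ) m; first by rewrite mulr1 subrr eqxx.
  rewrite mulr0 subr0 => /v_deg0/eqP; rewrite mdeg_eq0 => /eqP /sup_eq0 E.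
  by rewrite E eqxx in ne.
- move=> i v i_gt0 v_deg dv_J; exists (h_alg v); split.
  + suff : supported_by (fun m => mdeg m == i.-1) (h_alg v) by move=> H m /H /eqP.
    by apply: supported_lift => z /v_deg deg_z m /hm_deg; rewrite deg_z.
  + have -> : v - d_alg (h_alg v) = h_alg (d_alg v).
      suff htpy : d_alg (h_alg v) + h_alg (d_alg v) = v.
        by rewrite -{1}htpy addrAC subrr add0r.
      by apply: homotopy => z /v_deg deg_z; rewrite -mdeg_eq0 deg_z -lt0n.
    move/J_span: dv_J => dv_nf; apply/J_span.
    apply: (supported_lift (f := @hm Γ) (v := d_alg v)) => z /dv_nf nf_z m.
    by move/hm_sup/eqP; rewrite /nonface => ->.
Qed.
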